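(* Let $\mu>0$, $a\in\left(-\frac{2\mu}{9},0\right)\cup\left(0,\frac{4\mu}{9}\right)$ and $s_1\in\left[\frac{2\mu}{3},\infty\right)$. Then $\left|\frac{\beta_n(a,s_1)}{\beta_1(a,s_1)}\right|\le n$ for all $n\ge2$.
   Context: For real $a$ and $s_1>0$ let $H(s_1,\tilde z;a)=\dfrac{27a^2\tilde z\,(2s_1-3a)}{27a^3\tilde z-27a^2\tilde z s_1-(1-\tilde z)^2s_1^3}=\sum_{n\ge0}\beta_n(a,s_1)\tilde z^n$ (Taylor expansion about $\tilde z=0$), so that $\beta_1(a,s_1)=\frac{27a^2}{s_1^3}(3a-2s_1)$. *)

From Stdlib Require Import Reals Arith.
From Coquelicot Require Import Coquelicot.
Open Scope R_scope.

Definition H (s1 z a : R) : R :=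
  27 * a ^ 2 * z * (2 * s1 - 3 * a) /
  (27 * a ^ 3 * z - 27 * a ^ 2 * z * s1 - (1 - z) ^ 2 * s1 ^ 3).

Definition beta (n : nat) (a s1 : R) : R :=
  Derive_n (fun z => H s1 z a) n 0 / INR (Factorial.fact n).

(* The denominator of H factors as -s1^3 (1 - t z + z^2) with
   t = 2 - 27 a^2 (s1 - a) / s1^3, so H(z) = beta_1 z / (1 - t z + z^2) and
   beta_n = beta_1 U_{n-1}(t/2), where U is the Chebyshev polynomial of the
   second kind.  Since 4 s1^3 - 27 a^2 (s1 - a) = (s1 + 3a)(2 s1 - 3a)^2, the
   hypotheses put t in [-2, 2], and there |U_{n-1}(t/2)| <= n for every n. *)

From Stdlib Require Import Reals Lra Lia Psatz.
From Coquelicot Require Import Coquelicot.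
Open Scope R_scope.

Lemma PSeries_X y :
  PSeries (PS_incr_1 (fun j => match j with O => 1 | S _ => 0 end)) y = y.
Proof.
  rewrite PSeries_incr_1.
  assert (const : forall x,
      PSeries (fun j => match j with O => 1 | S _ => 0 end) x
      = Series (fun j => match j with O => 1 | S _ => 0 end)).
  { intros x; apply Series_ext; intros [|j]; simpl; ring. }
  rewrite const, <- (const 0), PSeries_0; simpl; ring.
Qed.

Section ChebyshevU.

Variable t : R.

(* [chebU n = U_{n-1}(t/2)]; its generating function is [z / (1 - t z + z^2)]. *)
Fixpoint chebU (n : nat) : R :=
  match n with
  | O => 0
  | S O => 1
  | S (S k as m) => t * chebU m - chebU k
  end.

Lemma chebU_SS n : chebU (S (S n)) = t * chebU (S n) - chebU n.
Proof. reflexivity. Qed.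

Lemma chebU_cassini n :
  chebU (S n) ^ 2 - t * chebU (S n) * chebU n + chebU n ^ 2 = 1.
Proof.
  induction n as [|n IH]; [simpl; ring|].
  rewrite chebU_SS, <- IH; ring.
Qed.

Hypothesis t_bound : -2 <= t <= 2.

Lemma abs_chebU_succ_le n : Rabs (chebU (S n)) <= Rabs (chebU n) + 1.
Proof.
  pose proof (chebU_cassini n) as cassini.
  set (x := chebU (S n)) in *; set (y := chebU n) in *.
  (* complete the square in the Cassini identity *)
  assert (square_le : (x - t * y / 2) ^ 2 <= 1).
  { assert (0 <= (4 - t * t) * (y * y)) by (apply Rmult_le_pos; nra).
    nra. }
  assert (ty_le : Rabs (t * y / 2) <= Rabs y).
  { rewrite Rabs_div, Rabs_mult, (Rabs_right 2) by lra.
    pose proof (Rabs_pos y).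
    assert (Rabs t <= 2) by (apply Rabs_le; lra).
    nra. }
  assert (Rabs (x - t * y / 2) <= 1).
  { apply Rabs_le; split; nra. }
  pose proof (Rabs_triang (x - t * y / 2) (t * y / 2)).
  replace (x - t * y / 2 + t * y / 2) with x in * by ring.
  lra.
Qed.

Lemma abs_chebU_le n : Rabs (chebU n) <= INR n.
Proof.
  induction n as [|n IH].
  - simpl; rewrite Rabs_R0; lra.
  - rewrite S_INR; pose proof (abs_chebU_succ_le n); lra.
Qed.

Lemma chebU_CV_radius : Rbar_le (1 / 2) (CV_radius chebU).
Proof.
  destruct (CV_radius_bounded chebU) as [radius_ub _].
  apply radius_ub; exists 1; intros n.
  rewrite Rabs_mult, <- RPow_abs, (Rabs_right (1 / 2)) by lra.
  assert (n_le_pow2 : INR n <= 2 ^ n).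
  { replace 2 with (INR 2) by (simpl; ring).
    rewrite <- pow_INR; apply le_INR, Nat.lt_le_incl, Nat.pow_gt_lin_r; lia. }
  assert (pow_half : 2 ^ n * (1 / 2) ^ n = 1).
  { rewrite <- Rpow_mult_distr; replace (2 * (1 / 2)) with 1 by field; apply pow1. }
  pose proof (abs_chebU_le n); pose proof (pow_le (1 / 2) n ltac:(lra)).
  nra.
Qed.

Lemma ex_pseries_chebU y : Rabs y < 1 / 2 -> ex_pseries chebU y.
Proof.
  intros y_small; apply CV_radius_inside.
  eapply Rbar_lt_le_trans; [|exact chebU_CV_radius]; exact y_small.
Qed.

Lemma PSeries_chebU_mul y :
  Rabs y < 1 / 2 -> PSeries chebU y * (1 - t * y + y ^ 2) = y.
Proof.
  intros y_small.
  pose proof (ex_pseries_chebU y y_small) as ex_u.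
  assert (ex_shift : ex_pseries (PS_scal (- t) (PS_incr_1 chebU)) y).
  { apply ex_pseries_scal; [apply Rmult_comm|]; apply ex_pseries_incr_1, ex_u. }
  (* the recurrence kills every coefficient of (1 - t z + z^2) chebU(z) but the linear one *)
  assert (coef : forall k,
    PS_plus (PS_plus chebU (PS_scal (- t) (PS_incr_1 chebU))) (PS_incr_n chebU 2) k
    = PS_incr_1 (fun j => match j with O => 1 | S _ => 0 end) k).
  { intros [|[|k]]; unfold PS_plus, PS_scal, PS_incr_1, plus, scal, zero, mult;
      cbn -[chebU]; [simpl; ring | simpl; ring | rewrite chebU_SS; ring]. }
  rewrite <- PSeries_X, <- (PSeries_ext _ _ y coef), !PSeries_plus.
  - rewrite PSeries_scal, PSeries_incr_1, PSeries_incr_n; ring.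
  - exact ex_u.
  - exact ex_shift.
  - apply ex_pseries_plus; [exact ex_u | exact ex_shift].
  - apply ex_pseries_incr_n, ex_u.
Qed.

End ChebyshevU.

Definition chebU_arg (a s1 : R) : R := 2 - 27 * a ^ 2 * (s1 - a) / s1 ^ 3.

Lemma chebU_arg_bound a s1 :
  0 < s1 -> a <= s1 -> 0 <= s1 + 3 * a -> -2 <= chebU_arg a s1 <= 2.
Proof.
  intros s1_pos a_le s1_3a.
  assert (s1_cube : 0 < s1 ^ 3) by (apply pow_lt; lra).
  assert (discriminant_nonneg : 0 <= 4 * s1 ^ 3 - 27 * a ^ 2 * (s1 - a)).
  { replace (4 * s1 ^ 3 - 27 * a ^ 2 * (s1 - a))
      with ((s1 + 3 * a) * (2 * s1 - 3 * a) ^ 2) by ring.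
    apply Rmult_le_pos; [lra | apply pow2_ge_0]. }
  assert (0 <= 27 * a ^ 2 * (s1 - a)) by (pose proof (pow2_ge_0 a); nra).
  unfold chebU_arg; split.
  - apply Rmult_le_reg_r with (s1 ^ 3); [lra|].
    replace ((2 - 27 * a ^ 2 * (s1 - a) / s1 ^ 3) * s1 ^ 3)
      with (2 * s1 ^ 3 - 27 * a ^ 2 * (s1 - a)) by (field; lra).
    lra.
  - assert (0 <= 27 * a ^ 2 * (s1 - a) / s1 ^ 3)
      by (apply Rdiv_le_0_compat; lra).
    lra.
Qed.

Lemma beta_eq_chebU a s1 n :
  0 < s1 -> -2 <= chebU_arg a s1 <= 2 ->
  beta n a s1 = 27 * a ^ 2 * (3 * a - 2 * s1) / s1 ^ 3 * chebU (chebU_arg a s1) n.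
Proof.
  intros s1_pos t_bound.
  set (t := chebU_arg a s1) in *.
  set (c := 27 * a ^ 2 * (3 * a - 2 * s1) / s1 ^ 3).
  assert (radius : Rbar_lt 0 (CV_radius (chebU t))).
  { eapply Rbar_lt_le_trans; [|exact (chebU_CV_radius t t_bound)]; simpl; lra. }
  unfold beta.
  rewrite (Derive_n_ext_loc _ (fun z => c * PSeries (chebU t) z)).
  - rewrite Derive_n_scal_l, (Derive_n_coef _ _ radius).
    field; apply INR_fact_neq_0.
  - assert (half_pos : 0 < 1 / 2) by lra.
    exists (mkposreal _ half_pos); intros y y_near.
    assert (y_small : Rabs y < 1 / 2).
    { change (Rabs (y - 0) < 1 / 2) in y_near; rewrite Rminus_0_r in y_near; exact y_near. }
    assert (ty_le : t * y <= 2 * Rabs y).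
    { unfold Rabs; destruct (Rcase_abs y); nra. }
    assert (quadratic_pos : 0 < 1 - t * y + y ^ 2) by nra.
    assert (denominator : 27 * a ^ 3 * y - 27 * a ^ 2 * y * s1 - (1 - y) ^ 2 * s1 ^ 3
                          = - s1 ^ 3 * (1 - t * y + y ^ 2)).
    { unfold t, chebU_arg; field; lra. }
    unfold H; rewrite denominator, <- (PSeries_chebU_mul t t_bound y y_small) at 1.
    unfold c; field; lra.
Qed.

Theorem mainTheorem5 (mu a s1 : R) :
  0 < mu ->
  ((- (2 * mu / 9) < a < 0) \/ (0 < a < 4 * mu / 9)) ->
  2 * mu / 3 <= s1 ->
  forall n : nat, (2 <= n)%nat ->
    Rabs (beta n a s1 / beta 1 a s1) <= INR n.
Proof.
  intros mu_pos a_range s1_ge n _.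
  assert (s1_pos : 0 < s1) by lra.
  assert (a_nonzero : a <> 0) by (destruct a_range; lra).
  assert (beta1_factor_nonzero : 3 * a - 2 * s1 <> 0) by (destruct a_range; lra).
  assert (t_bound : -2 <= chebU_arg a s1 <= 2)
    by (apply chebU_arg_bound; destruct a_range; lra).
  rewrite !(beta_eq_chebU a s1 _ s1_pos t_bound).
  replace (chebU _ 1) with 1 by reflexivity.
  replace (_ * chebU _ n / (_ * 1)) with (chebU (chebU_arg a s1) n).
  - exact (abs_chebU_le _ t_bound n).
  - field; split; [|split]; try lra; apply pow_nonzero; lra.
Qed.
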